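(* Let $n$ be the number of validators and $f\in[0,n]$. Suppose (A) the algorithm by which validators cast FFG-votes guarantees, for every validator following it: at most one FFG-vote is sent in any slot; the target $\mathcal{T}$ of the FFG-vote sent in slot $t$ has $\mathcal{T}.c=t$; and if $\mathcal{S},\mathcal{S}'$ are the sources of FFG-votes sent in slots $t\le t'$ then $\mathcal{S}\le\mathcal{S}'$; and (B) for every round $r$ and every validator $v_i$ honest in round $r$, the chain $\chi^{\mathrm{fin}}_i$ output by $v_i$ at round $r$ is a chain finalized according to the global view $\mathcal{V}^r_{\mathsf{G}}$ (the set of all messages sent up to round $r$). Then the finalized chain $\chi^{\mathrm{fin}}$ is $\frac{n}{3}$-accountable.
   Context: Validators $v_1,\dots,v_n$ exchange signed messages; time is divided into rounds grouped into slots. A validator is honest until it is (possibly) corrupted by the adversary, after which it may deviate arbitrarily; honest validators follow the protocol. Blocks are pairs $(b,p)$ with $p$ the slot; chains are identified with their last block, $\chi.p$ is the slot of the last block; genesis $B_{\text{genesis}}$ has slot $-1$; $\preceq$ is the prefix relation and chains conflict if neither is a prefix of the other. Checkpoints $\mathcal{C}=(\chi,c)$; FFG-vote $\mathcal{C}_1\to\mathcal{C}_2$ valid iff $\mathcal{C}_1.c<\mathcal{C}_2.c$ and $\mathcal{C}_1.\chi\preceq\mathcal{C}_2.\chi$; FFG-votes are carried inside VOTE messages. In a view (set of messages) $\mathcal{V}$: $\mathcal{C}$ is justified iff $\mathcal{C}=(B_{\text{genesis}},0)$ or there are VOTE messages in $\mathcal{V}$ from at least $\frac{2}{3}n$ distinct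 validators whose FFG-votes $\mathcal{S}\to\mathcal{T}$ are valid, with $\mathcal{S}$ justified in $\mathcal{V}$, $\mathcal{S}.\chi\preceq\mathcal{C}.\chi\preceq\mathcal{T}.\chi$, $\mathcal{T}.c=\mathcal{C}.c$; $\mathcal{C}$ is finalized iff $\mathcal{C}=(B_{\text{genesis}},0)$ or $\mathcal{C}$ is justified and there are VOTE messages in $\mathcal{V}$ from at least $\frac{2}{3}n$ distinct validators with valid FFG-votes $\mathcal{C}\to\mathcal{T}$, $\mathcal{T}.c=\mathcal{C}.c+1$. A chain is finalized according to $\mathcal{V}$ iff it is a prefix of the chain of a checkpoint finalized in $\mathcal{V}$. Preorder: $\mathcal{C}\le\mathcal{C}'$ iff $\mathcal{C}.c<\mathcal{C}'.c$ or ($\mathcal{C}.c=\mathcal{C}'.c$ and $\mathcal{C}.\chi.p\le\mathcal{C}'.\chi.p$); $<$ is its strict part. Slashing conditions for two distinct FFG-votes $\mathcal{C}_1\to\mathcal{C}_2$, $\mathcal{C}_3\to\mathcal{C}_4$ by the same validator: $\mathbf{E_1}$: $\mathcal{C}_2.c=\mathcal{C}_4.c$; $\mathbf{E_2}$: $\mathcal{C}_3<\mathcal{C}_1$ and $\mathcal{C}_2.c<\mathcal{C}_4.c$. Accountability: a protocol outputting chain $\chi^{\mathrm{fin}}$ is $f^{\mathrm{acc}}$-accountable if, whenever safety is violated (two validators, honest at rounds $r,r'$ respectively, output chains $\chi^{\mathrm{fin},r}_i$, $\chi^{\mathrm{fin},r'}_j$ that conflict), then, having access to all messages sent, it is possible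 to produce a proof identifying at least $f^{\mathrm{acc}}$ validators as protocol violators, and such a proof can never falsely accuse an honest validator that followed the protocol. *)

From HB Require Import structures.
From mathcomp Require Import all_boot all_order all_algebra.
Set Implicit Arguments. Unset Strict Implicit. Unset Printing Implicit Defensive.
Import Order.TTheory GRing.Theory Num.Theory.

Section Model.

(* B : type of block contents; a block is a pair (b, p) with p its slot. *)
Variable B : Type.

Definition block := (B * nat)%type.

(* A chain is the sequence of blocks following genesis (genesis itself is
   implicit, with slot -1); slots strictly increase along a chain.
   The chain is identified with its last block. *)
Definition chain := {s : seq block | sorted ltn (map snd s)}.

Definition blocks (x : chain) : seq block := sval x.

Definition genesis : chain :=
  exist (fun s : seq block => sorted ltn (map snd s)) [::] (erefl true).

Definition chain_slot (x : chain) : int :=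
  if blocks x is [::] then (-1)%R else Posz (last 0%N (map snd (blocks x))).

Definition prefix (x y : chain) : Prop := exists s, blocks y = blocks x ++ s.

Definition conflicting (x y : chain) : Prop := ~ prefix x y /\ ~ prefix y x.

Record checkpoint := Checkpoint { cp_chain : chain; cp_c : nat }.

Definition genesis_cp : checkpoint := Checkpoint genesis 0.

Definition valid_ffg (S T : checkpoint) : Prop :=
  (cp_c S < cp_c T)%N /\ prefix (cp_chain S) (cp_chain T).

Definition cp_le (C C' : checkpoint) : Prop :=
  (cp_c C < cp_c C')%N \/
  (cp_c C = cp_c C' /\ (chain_slot (cp_chain C) <= chain_slot (cp_chain C'))%R).

Definition cp_lt (C C' : checkpoint) : Prop := cp_le C C' /\ ~ cp_le C' C.

Variable n : nat.  (* validators are 'I_n *)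

(* A VOTE message (only its signer and its FFG-vote S -> T matter here). *)
Record vote_msg := VoteMsg { vm_sender : 'I_n; vm_src : checkpoint; vm_tgt : checkpoint }.

Definition view := vote_msg -> Prop.

Definition two_thirds (S : {set 'I_n}) : Prop := (2 * n <= 3 * #|S|)%N.

Inductive justified (V : view) : checkpoint -> Prop :=
| justified_genesis : justified V genesis_cp
| justified_votes (C : checkpoint) (S : {set 'I_n}) :
    two_thirds S ->
    (forall v, v \in S -> exists m, V m /\ vm_sender m = v /\
        valid_ffg (vm_src m) (vm_tgt m) /\ justified V (vm_src m) /\
        prefix (cp_chain (vm_src m)) (cp_chain C) /\
        prefix (cp_chain C) (cp_chain (vm_tgt m)) /\
        cp_c (vm_tgt m) = cp_c C) ->
    justified V C.

Definition finalized (V : view) (C : checkpoint) : Prop :=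
  C = genesis_cp \/
  (justified V C /\
   exists S : {set 'I_n}, two_thirds S /\
     forall v, v \in S -> exists m, V m /\ vm_sender m = v /\
        vm_src m = C /\ valid_ffg (vm_src m) (vm_tgt m) /\
        cp_c (vm_tgt m) = (cp_c C).+1).

Definition chain_finalized (V : view) (x : chain) : Prop :=
  exists C, finalized V C /\ prefix x (cp_chain C).

(* slashing conditions, for two distinct FFG-votes C1 -> C2 and C3 -> C4 *)
Definition E1 (C1 C2 C3 C4 : checkpoint) : Prop := cp_c C2 = cp_c C4.
Definition E2 (C1 C2 C3 C4 : checkpoint) : Prop :=
  cp_lt C3 C1 /\ (cp_c C2 < cp_c C4)%N.

Definition slashable (V : view) (v : 'I_n) : Prop :=
  exists m1 m2, V m1 /\ V m2 /\ vm_sender m1 = v /\ vm_sender m2 = v /\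
    (vm_src m1, vm_tgt m1) <> (vm_src m2, vm_tgt m2) /\
    (E1 (vm_src m1) (vm_tgt m1) (vm_src m2) (vm_tgt m2) \/
     E2 (vm_src m1) (vm_tgt m1) (vm_src m2) (vm_tgt m2)).

(* An execution: sent r m = message m is sent at round r (by vm_sender m);
   honest r v = validator v is honest at round r (honest until corrupted);
   fin_out v r = chain chi^fin output by v at round r. *)
Record execution := Execution {
  sent : nat -> vote_msg -> Prop;
  honest : nat -> 'I_n -> Prop;
  honest_until_corrupted : forall r r' v, (r' <= r)%N -> honest r v -> honest r' v;
  fin_out : 'I_n -> nat -> chain
}.

Variable E : execution.
Variable k : nat. (* number of rounds per slot; round r is in slot r %/ k *)

Definition slot_of (r : nat) : nat := (r %/ k)%N.

Definition global_view (r : nat) : view := fun m => exists r', (r' <= r)%N /\ sent E r' m.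

Definition all_msgs : view := fun m => exists r, sent E r m.

(* Hypothesis (A): properties of the FFG-voting algorithm for validators
   following it (i.e. for messages sent while honest). *)
Definition ffg_voting_ok : Prop :=
  (forall v r r' m m', honest E r v -> honest E r' v -> sent E r m -> sent E r' m' ->
     vm_sender m = v -> vm_sender m' = v -> slot_of r = slot_of r' ->
     (vm_src m, vm_tgt m) = (vm_src m', vm_tgt m')) /\
  (forall v r m, honest E r v -> sent E r m -> vm_sender m = v ->
     cp_c (vm_tgt m) = slot_of r) /\
  (forall v r r' m m', honest E r v -> honest E r' v -> sent E r m -> sent E r' m' ->
     vm_sender m = v -> vm_sender m' = v -> (slot_of r <= slot_of r')%N ->
     cp_le (vm_src m) (vm_src m')).

Definition outputs_finalized : Prop :=
  forall r v, honest E r v -> chain_finalized (global_view r) (fin_out E v r).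

Definition safety_violation : Prop :=
  exists r r' i j, honest E r i /\ honest E r' j /\
    conflicting (fin_out E i r) (fin_out E j r').

Definition accountable (facc : rat) : Prop :=
  (forall v, slashable all_msgs v -> exists r, ~ honest E r v) /\
  (safety_violation ->
     exists S : {set 'I_n}, (facc <= (#|S|)%:R)%R /\
       forall v, v \in S -> slashable all_msgs v).

End Model.

(** Two supermajorities of at least 2n/3 validators meet in at least n/3
    validators, so it suffices to exhibit such an intersection all of whose
    members signed a slashable pair of votes.  Let the conflicting finalized
    chains end in finalized checkpoints C and J with [cp_c C <= cp_c J].  If
    the epochs are equal, every validator justifying both voted twice for the
    same target epoch (E1).  Otherwise take a validator that both finalized C
    (vote C -> epoch [cp_c C + 1]) and justified J (vote S -> epoch [cp_c J],
    with S ⪯ J).  Either its vote for J surrounds its vote from C (E2), or S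
    is a justified checkpoint of epoch >= [cp_c C] that still does not extend
    C, and we descend to S: by induction on the epoch we end in the E1 case.
    Honest validators never produce E1 or E2 pairs, because of the properties
    (A) of the voting rule. *)
From Pilot Require Import Defs.
From mathcomp Require Import all_boot all_order all_algebra zify.
From Stdlib Require Import Classical.
Set Implicit Arguments. Unset Strict Implicit. Unset Printing Implicit Defensive.
Import Order.TTheory GRing.Theory Num.Theory.

Local Notation "x ⪯ y" := (Defs.prefix x y) (at level 70).

Lemma eq_cat_prefix (T : Type) (a b s t : seq T) : a ++ s = b ++ t ->
  (exists u, b = a ++ u) \/ (exists u, a = b ++ u).
Proof.
elim: a b => [|x a IH] [|y b] /=.
- by left; exists [::].
- by left; exists (y :: b).
- by right; exists (x :: a).
- by case=> -> /IH [[u ->]|[u ->]]; [left|right]; exists u.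
Qed.

Section Chains.
Variable B : Type.
Implicit Types x y z : chain B.

Lemma chain_prefix_trans x y z : x ⪯ y -> y ⪯ z -> x ⪯ z.
Proof. by move=> [s Hs] [t Ht]; exists (s ++ t); rewrite Ht Hs catA. Qed.

Lemma genesis_prefix x : genesis B ⪯ x.
Proof. by exists (blocks x). Qed.

Lemma chain_prefix_total x y z : x ⪯ z -> y ⪯ z -> x ⪯ y \/ y ⪯ x.
Proof.
move=> [s Hs] [t]; rewrite Hs => /eq_cat_prefix.
by case=> [[u Hu]|[u Hu]]; [left|right]; exists u.
Qed.

Lemma conflicting_sym x y : conflicting x y -> conflicting y x.
Proof. by case. Qed.

Lemma conflicting_prefix x1 x2 y1 y2 :
  conflicting x1 x2 -> x1 ⪯ y1 -> x2 ⪯ y2 -> conflicting y1 y2.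
Proof.
move=> [n12 n21] h1 h2; split => h.
- by case: (chain_prefix_total (chain_prefix_trans h1 h) h2).
- by case: (chain_prefix_total h1 (chain_prefix_trans h2 h)).
Qed.

Lemma genesis_not_conflicting x : ~ conflicting (genesis B) x.
Proof. by case=> + _; apply; apply: genesis_prefix. Qed.

Lemma chain_slot_strict_prefix x y : x ⪯ y -> blocks x <> blocks y ->
  (chain_slot x < chain_slot y)%R.
Proof.
case: y => ys sorted_y [s /= ys_def]; rewrite /chain_slot /= ys_def.
rewrite ys_def {ys ys_def} in sorted_y.
case: s sorted_y => [|c s]; first by rewrite cats0.
case: (blocks x) => [|a bx] //= sorted_y _.
rewrite ltz_nat map_cat last_cat.
have : sorted ltn (map snd ((a :: bx) ++ c :: s)) := sorted_y.
rewrite sorted_pairwise; last exact: ltn_trans.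
rewrite map_cat pairwise_cat => /and3P [/allrelP lt_xs _ _].
by apply: lt_xs; apply: mem_last.
Qed.

End Chains.

Section Views.
Variables (B : Type) (n : nat).
Implicit Types V W : view B n.

Lemma justified_sub V W : (forall m, V m -> W m) ->
  forall C, justified V C -> justified W C.
Proof.
move=> sub_VW; fix IH 2; move=> C [|C' Q two_thirds_Q votes_Q].
  exact: justified_genesis.
apply: (justified_votes two_thirds_Q) => v /votes_Q [m [Vm [<- [ok [js rest]]]]].
by exists m; do !split => //; [exact: sub_VW | exact: IH].
Qed.

Lemma finalized_sub V W : (forall m, V m -> W m) ->
  forall C, finalized V C -> finalized W C.
Proof.
move=> sub_VW C [->|[jC [F [two_thirds_F votes_F]]]]; first by left.
right; split; first exact: justified_sub jC.
exists F; split => // v /votes_F [m [Vm rest]].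
by exists m; split => //; exact: sub_VW.
Qed.

Lemma two_thirds_meet (Q1 Q2 : {set 'I_n}) : two_thirds Q1 -> two_thirds Q2 ->
  ((n%:R / 3%:R)%R <= (#|Q1 :&: Q2|)%:R :> rat)%R.
Proof.
rewrite /two_thirds => Q1_big Q2_big.
have cardUI := cardsUI Q1 Q2.
have : (#|Q1 :|: Q2| <= n)%N by rewrite -[X in (_ <= X)%N]card_ord max_card.
by rewrite ler_pdivrMr // -natrM ler_nat; lia.
Qed.

End Views.

Lemma slashable_corrupted B n k (E : execution B n) : ffg_voting_ok E k ->
  forall v, slashable (all_msgs E) v -> exists r, ~ honest E r v.
Proof.
move=> [one_vote_per_slot [target_epoch source_mono]] v.
move=> [m1 [m2 [[r1 sent1] [[r2 sent2] [sender1 [sender2 [distinct slash]]]]]]].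
apply: NNPP => /not_ex_not_all always_honest.
have epoch1 := target_epoch v r1 m1 (always_honest r1) sent1 sender1.
have epoch2 := target_epoch v r2 m2 (always_honest r2) sent2 sender2.
case: slash => [same_target | [[_ src_not_le] target_lt]].
- apply: distinct; apply: (one_vote_per_slot v r1 r2) => //.
  by rewrite -epoch1 -epoch2.
- apply: src_not_le; apply: (source_mono v r1 r2) => //.
  by rewrite -epoch1 -epoch2 ltnW.
Qed.

Section Safety.
Variables (B : Type) (n : nat) (V : view B n).

Definition third_slashable : Prop := exists S : {set 'I_n},
  ((n%:R / 3%:R)%R <= (#|S|)%:R :> rat)%R /\ forall v, v \in S -> slashable V v.

Lemma finalized_justified C : finalized V C -> justified V C.
Proof. by case=> [->|[]//]; exact: justified_genesis. Qed.

Lemma same_epoch_conflict_slashable A A' :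
  justified V A -> justified V A' -> cp_c A = cp_c A' ->
  conflicting (cp_chain A) (cp_chain A') -> third_slashable.
Proof.
case=> [|A0 Q two_thirds_Q votes_Q]; first by move=> _ _ /genesis_not_conflicting.
case=> [|A1 Q' two_thirds_Q' votes_Q'] same_epoch conf.
  by case: (genesis_not_conflicting (conflicting_sym conf)).
exists (Q :&: Q'); split; first exact: two_thirds_meet.
move=> v; rewrite inE => /andP [vQ vQ'].
have [m [Vm [sm [_ [_ [_ [A_tgt tgt_epoch]]]]]]] := votes_Q v vQ.
have [m' [Vm' [sm' [_ [_ [_ [A'_tgt' tgt'_epoch]]]]]]] := votes_Q' v vQ'.
exists m, m'; do 4!split => //; split.
- case=> _ same_tgt; rewrite same_tgt in A_tgt.
  by case: (chain_prefix_total A_tgt A'_tgt') => ?; [apply: conf.1 | apply: conf.2].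
- by left; rewrite /E1 tgt_epoch tgt'_epoch same_epoch.
Qed.

Lemma surround_slashable v m m' : V m -> V m' ->
  vm_sender m = v -> vm_sender m' = v -> cp_lt (vm_src m') (vm_src m) ->
  (cp_c (vm_tgt m) <= cp_c (vm_tgt m'))%N -> slashable V v.
Proof.
move=> Vm Vm' sm sm' src_lt tgt_le; exists m, m'; do 4!split => //; split.
- by case=> same_src _; rewrite same_src in src_lt; case: src_lt.
- rewrite leq_eqVlt in tgt_le; case/orP: tgt_le => [/eqP same|lt]; first by left.
  by right.
Qed.

Lemma crossing_vote_cases v m m' C : V m -> V m' ->
  vm_sender m = v -> vm_sender m' = v -> vm_src m' = C ->
  cp_c (vm_tgt m') = (cp_c C).+1 -> (cp_c C < cp_c (vm_tgt m))%N ->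
  ~ cp_chain C ⪯ cp_chain (vm_src m) ->
  [\/ slashable V v, (cp_c C < cp_c (vm_src m))%N |
       cp_c (vm_src m) = cp_c C /\ conflicting (cp_chain C) (cp_chain (vm_src m))].
Proof.
move=> Vm Vm' sm sm' src' tgt' C_tgt C_not_src.
have surrounds : cp_lt (vm_src m) C -> slashable V v.
  by move=> lt; apply: (surround_slashable Vm' Vm) => //; rewrite ?src' // tgt'.
case: (ltngtP (cp_c (vm_src m)) (cp_c C)) => [lt|gt|same_epoch].
- apply/Or31/surrounds; split; first by left.
  by case=> [|[]]; lia.
- exact: Or32.
- have [src_C|C_src] := classic (cp_chain (vm_src m) ⪯ cp_chain C); last first.
    by apply: Or33; split.
  have [same|ne] := classic (blocks (cp_chain (vm_src m)) = blocks (cp_chain C)).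
    by case: C_not_src; exists [::]; rewrite same cats0.
  have slot_lt := chain_slot_strict_prefix src_C ne.
  apply/Or31/surrounds; split; first by right; split; [|exact: ltW].
  by case=> [|[_]]; [lia | rewrite leNgt slot_lt].
Qed.

Lemma justified_not_extending_finalized_slashable C J :
  finalized V C -> justified V J -> (cp_c C < cp_c J)%N ->
  ~ cp_chain C ⪯ cp_chain J -> third_slashable.
Proof.
case=> [-> _ _ []|[jC [F [two_thirds_F votes_F]]]]; first exact: genesis_prefix.
have [c] := ubnP (cp_c J); elim: c J => // c IH J J_lt jJ.
case: jJ J_lt => [|J' Q two_thirds_Q votes_Q] //= J_lt C_J C_not_J.
have member_cases v : v \in Q :&: F -> slashable V v \/ third_slashable.
  rewrite inE => /andP [vQ vF].
  have [m [Vm [sm [[S_lt_T _] [jS [S_J [_ tgt_epoch]]]]]]] := votes_Q v vQ.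
  have [m' [Vm' [sm' [src' [_ tgt'_epoch]]]]] := votes_F v vF.
  have C_not_S : ~ cp_chain C ⪯ cp_chain (vm_src m).
    by move=> /chain_prefix_trans /(_ S_J).
  case: (crossing_vote_cases Vm Vm' sm sm' src' tgt'_epoch _ C_not_S).
  - by rewrite tgt_epoch.
  - by left.
  - by move=> C_S; right; apply: (IH (vm_src m)) => //; lia.
  - by move=> [same conf]; right; exact: same_epoch_conflict_slashable jC jS _ conf.
have [all_slashable|] := classic (forall v, v \in Q :&: F -> slashable V v).
  by exists (Q :&: F); split; first exact: two_thirds_meet.
move=> /not_all_ex_not [v not_member_slashable].
have [vQF not_slashable] := imply_to_and _ _ not_member_slashable.
by case: (member_cases v vQF).
Qed.

Lemma finalized_conflicting_slashable C1 C2 : finalized V C1 -> finalized V C2 ->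
  conflicting (cp_chain C1) (cp_chain C2) -> third_slashable.
Proof.
wlog le12 : C1 C2 / (cp_c C1 <= cp_c C2)%N => [sym|fC1 fC2 conf].
  move=> fC1 fC2 conf; case: (leqP (cp_c C1) (cp_c C2)) => [le|/ltnW le].
    exact: sym le fC1 fC2 conf.
  exact: sym le fC2 fC1 (conflicting_sym conf).
case: (ltngtP (cp_c C1) (cp_c C2)) le12 => // [lt|same] _.
  exact: justified_not_extending_finalized_slashable fC1
    (finalized_justified fC2) lt conf.1.
exact: same_epoch_conflict_slashable
  (finalized_justified fC1) (finalized_justified fC2) same conf.
Qed.

End Safety.

Theorem theorem4p4 (B : Type) (n f k : nat) (E : execution B n) :
  (f <= n)%N -> (0 < k)%N ->
  ffg_voting_ok E k ->
  outputs_finalized E ->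
  accountable E ((n%:R / 3%:R)%R : rat).
Proof.
move=> _ _ voting_ok outputs_fin; split; first exact: slashable_corrupted voting_ok.
move=> [r [r' [i [j [honest_i [honest_j conf]]]]]].
have [C1 [fin1 out1]] := outputs_fin r i honest_i.
have [C2 [fin2 out2]] := outputs_fin r' j honest_j.
have global_sub s m : global_view E s m -> all_msgs E m by case=> s' [_ ?]; exists s'.
apply: (finalized_conflicting_slashable (finalized_sub (global_sub r) fin1)
  (finalized_sub (global_sub r') fin2)).
exact: conflicting_prefix conf out1 out2.
Qed.
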